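(* $\operatorname{LLPO}\le_{\mathrm{sW}}\operatorname{Proj}_\mathbb{R}$.
   Context: Represented spaces: a representation of a set $X$ is a partial surjection $\delta_X:\subseteq\mathbb{N}^\mathbb{N}\to X$. For a partial multi-valued function $f:\subseteq X\rightrightarrows Y$, a realizer is a partial $F:\subseteq\mathbb{N}^\mathbb{N}\to\mathbb{N}^\mathbb{N}$ with $\delta_Y(F(p))\in f(\delta_X(p))$ for all $p$ with $\delta_X(p)\in\mathrm{dom}(f)$. Strong Weihrauch reducibility $f\le_{\mathrm{sW}}g$: there are computable partial $H,K:\subseteq\mathbb{N}^\mathbb{N}\to\mathbb{N}^\mathbb{N}$ with $H\circ G\circ K$ a realizer of $f$ for every realizer $G$ of $g$. $\operatorname{LLPO}:\subseteq\mathbb{N}^\mathbb{N}\times\mathbb{N}^\mathbb{N}\rightrightarrows\{0,1\}$: its domain consists of pairs $(p_0,p_1)$ such that there is at most one pair $(j,m)$ with $p_j(m)\ne0$, and $i\in\operatorname{LLPO}(p_0,p_1)$ iff $p_i=0^\mathbb{N}$. $\mathbb{R}$ has the Cauchy representation. $\mathcal{A}(\mathbb{R})$: closed subsets of $\mathbb{R}$ with total information, a name of $A$ consisting of an enumeration of rational open intervals whose union is $\mathbb{R}\setminus A$ together with an enumeration of exactly the rational open intervals meeting $A$. $\operatorname{Proj}_\mathbb{R}:\subseteq\mathbb{R}\times\mathcal{A}(\mathbb{R})\rightrightarrows\mathbb{R}$ maps $(x,A)$ with $A$ nonempty closed to the set of $y\in A$ with $|x-y|=d(x,A)$. *)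

From Stdlib Require Import Reals Lra Lia List Arith.
From Stdlib Require Import Rtopology.
Import ListNotations.
Open Scope R_scope.

Definition Baire := nat -> nat.

Inductive recf : Type :=
| RZero : recf
| RSucc : recf
| RProj : nat -> recf
| RComp : recf -> list recf -> recf
| RPrim : recf -> recf -> recf
| RMu   : recf -> recf.

Inductive reval : recf -> list nat -> nat -> Prop :=
| ev_zero : forall v, reval RZero v 0
| ev_succ : forall x v, reval RSucc (x :: v) (S x)
| ev_proj : forall i v x, nth_error v i = Some x -> reval (RProj i) v x
| ev_comp : forall f gs v ys z, revals gs v ys -> reval f ys z -> reval (RComp f gs) v z
| ev_prim0 : forall f g v z, reval f v z -> reval (RPrim f g) (0%nat :: v) z
| ev_primS : forall f g n v r z,
    reval (RPrim f g) (n :: v) r -> reval g (n :: r :: v) z ->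
    reval (RPrim f g) (S n :: v) z
| ev_mu : forall f v n,
    reval f (n :: v) 0%nat ->
    (forall m, (m < n)%nat -> exists k, reval f (m :: v) (S k)) ->
    reval (RMu f) v n
with revals : list recf -> list nat -> list nat -> Prop :=
| evs_nil : forall v, revals [] v []
| evs_cons : forall g gs v y ys, reval g v y -> revals gs v ys -> revals (g :: gs) v (y :: ys).

Definition cpair (x y : nat) : nat := (Nat.div ((x + y) * (x + y + 1)) 2 + y)%nat.

Fixpoint enc (l : list nat) : nat :=
  match l with
  | [] => 0%nat
  | x :: t => S (cpair x (enc t))
  end.

Definition recursive_word (w : list nat -> list nat) : Prop :=
  exists e : recf, forall l, reval e [enc l] (enc (w l)).

Definition is_prefix (l l' : list nat) : Prop := exists t, l' = l ++ t.

Definition monotone_word (w : list nat -> list nat) : Prop :=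
  forall l l', is_prefix l l' -> is_prefix (w l) (w l').

Definition pref (p : Baire) (k : nat) : list nat := map p (seq 0 k).

Definition computes (w : list nat -> list nat) (p q : Baire) : Prop :=
  forall n, exists k, nth_error (w (pref p k)) n = Some (q n).

Definition pfun := Baire -> Baire -> Prop.

Definition functional (F : pfun) : Prop :=
  forall p q q', F p q -> F p q' -> q = q'.

(** A partial F is computable if some Type-2 machine (monotone recursive
    word function) computes F(p) on every input p in dom(F). *)
Definition pcomputable (F : pfun) : Prop :=
  functional F /\
  exists w, recursive_word w /\ monotone_word w /\
    forall p q, F p q -> computes w p q.

Definition pcomp3 (H G K : pfun) : pfun :=
  fun p q => exists a b, K p a /\ G a b /\ H b q.

Record rspace := { carrier : Type; delta : Baire -> carrier -> Prop }.

Record problem (X Y : rspace) := {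
  pdom : carrier X -> Prop;
  pval : carrier X -> carrier Y -> Prop }.
Arguments pdom {X Y}.
Arguments pval {X Y}.

Definition realizer {X Y : rspace} (f : problem X Y) (F : pfun) : Prop :=
  forall p x, delta X p x -> pdom f x ->
    exists q, F p q /\ exists y, delta Y q y /\ pval f x y.

Definition sW_le {X Y Z W : rspace} (f : problem X Y) (g : problem Z W) : Prop :=
  exists H K : pfun, pcomputable H /\ pcomputable K /\
    forall G : pfun, functional G -> realizer g G -> realizer f (pcomp3 H G K).

Definition prod_space (X Y : rspace) : rspace :=
  {| carrier := (carrier X * carrier Y)%type;
     delta := fun r xy => delta X (fun n => r (2 * n)%nat) (fst xy) /\
                          delta Y (fun n => r (2 * n + 1)%nat) (snd xy) |}.

Definition baire_space : rspace := {| carrier := Baire; delta := fun p q => p = q |}.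

Definition b2n (b : bool) : nat := if b then 1%nat else 0%nat.
Definition two_space : rspace := {| carrier := bool; delta := fun p b => p 0%nat = b2n b |}.

Definition LLPO : problem (prod_space baire_space baire_space) two_space :=
  @Build_problem (prod_space baire_space baire_space) two_space
  (fun pp : Baire * Baire =>
       forall (j j' : bool) (m m' : nat),
         (if j then snd pp else fst pp) m <> 0%nat ->
         (if j' then snd pp else fst pp) m' <> 0%nat ->
         j = j' /\ m = m')
  (fun (pp : Baire * Baire) (i : bool) =>
       forall m, (if i then snd pp else fst pp) m = 0%nat).

Definition qR (a b c : nat) : R := (INR a - INR b) / INR (S c).
Definition is_rat_code (k : nat) (q : R) : Prop :=
  exists a b c, k = cpair a (cpair b c) /\ q = qR a b c.

Definition real_space : rspace :=
  {| carrier := R;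
     delta := fun p x => forall n, exists q, is_rat_code (p n) q /\ Rabs (x - q) <= / 2 ^ n |}.

Definition is_int_code (k : nat) (lo hi : R) : Prop :=
  exists r s, k = cpair r s /\ is_rat_code r lo /\ is_rat_code s hi.

(** closed subsets with total information: even part enumerates (with k+1 for
    code k, 0 = no information) intervals whose union is the complement; odd part
    enumerates exactly the codes of rational open intervals meeting A. *)
Definition closed_space : rspace :=
  {| carrier := R -> Prop;
     delta := fun p A =>
       (forall x, ~ A x <-> exists n k lo hi,
            p (2 * n)%nat = S k /\ is_int_code k lo hi /\ lo < x < hi) /\
       (forall k, (exists lo hi, is_int_code k lo hi /\ exists x, A x /\ lo < x < hi)
                  <-> exists n, p (2 * n + 1)%nat = S k) |}.

Definition Proj_R : problem (prod_space real_space closed_space) real_space :=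
  @Build_problem (prod_space real_space closed_space) real_space
  (fun xA : R * (R -> Prop) => closed_set (snd xA) /\ exists y, snd xA y)
  (fun (xA : R * (R -> Prop)) (y : R) =>
       snd xA y /\ forall z, snd xA z -> Rabs (fst xA - y) <= Rabs (fst xA - z)).

From Stdlib Require Import Reals Lra Lia List Arith Cantor Classical.
Import ListNotations.

(* An instance (p0, p1) of LLPO is sent to the projection of [0] onto a two-point set {L, R}:
   L = -3 if p1 vanishes and L = -3 - 1/(j+1) if j is the first index with p1 j <> 0, and
   R = 3 or 3 + 1/(j+1) likewise from p0.  After reading a finite prefix, the search for the
   first nonzero entry confines each point to a rational segment shrinking to it, which is what
   makes a name of the set with total information computable from (p0, p1).  Since at most one
   of p0, p1 is nonzero, the nearest point to 0 is positive if p0 <> 0 (L < -3 < 3 = R) and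
   negative if p1 <> 0; as both points have modulus at least 3, the sign of the first Cauchy
   approximation of the projection tells which of p0, p1 vanishes. *)

Open Scope nat_scope.

Definition ufst (n : nat) : nat := fst (Cantor.of_nat n).
Definition usnd (n : nat) : nat := snd (Cantor.of_nat n).

Lemma cpair_to_nat x y : cpair x y = Cantor.to_nat (x, y).
Proof.
  rewrite to_nat_spec2. unfold cpair.
  replace (x + y + 1) with (S (y + x)) by lia. rewrite (Nat.add_comm x y). lia.
Qed.

Lemma ufst_cpair x y : ufst (cpair x y) = x.
Proof. unfold ufst. now rewrite cpair_to_nat, cancel_of_to. Qed.

Lemma usnd_cpair x y : usnd (cpair x y) = y.
Proof. unfold usnd. now rewrite cpair_to_nat, cancel_of_to. Qed.

Lemma cpair_unpair n : cpair (ufst n) (usnd n) = n.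
Proof. unfold ufst, usnd. rewrite cpair_to_nat, <- surjective_pairing. apply cancel_to_of. Qed.

Lemma cpair_inj x y x' y' : cpair x y = cpair x' y' -> x = x' /\ y = y'.
Proof.
  intros E. split.
  - now rewrite <- (ufst_cpair x y), E, ufst_cpair.
  - now rewrite <- (usnd_cpair x y), E, usnd_cpair.
Qed.

Lemma cpair_ge_r x y : y <= cpair x y.
Proof. rewrite cpair_to_nat. pose proof (to_nat_non_decreasing x y). lia. Qed.

Lemma usnd_le n : usnd n <= n.
Proof. rewrite <- (cpair_unpair n) at 2. apply cpair_ge_r. Qed.

Fixpoint tri (s : nat) : nat := match s with 0 => 0 | S n => tri n + S n end.

Lemma cpair_tri x y : cpair x y = tri (x + y) + y.
Proof.
  unfold cpair. f_equal. enough (2 * tri (x + y) = (x + y) * (x + y + 1)) as E.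
  { rewrite <- E, Nat.mul_comm. apply Nat.div_mul. lia. }
  induction (x + y); simpl; nia.
Qed.

Lemma tri_le s s' : s <= s' -> tri s <= tri s'.
Proof. induction 1; simpl; lia. Qed.

(** * Programs compiled from expressions *)

Definition implements1 (P : recf) (F : nat -> nat) : Prop :=
  forall x, reval P [x] (F x).
Definition implements2 (P : recf) (F : nat -> nat -> nat) : Prop :=
  forall x y, reval P [x; y] (F x y).
Definition implements3 (P : recf) (F : nat -> nat -> nat -> nat) : Prop :=
  forall x y z, reval P [x; y; z] (F x y z).

(* Each operation of an expression carries a program together with the function it is claimed
   to implement; [wf_expr] collects these claims, under which [compile] is correct. *)
Inductive expr : Type :=
| EVar (i : nat)
| EConst (n : nat)
| EA1 (P : recf) (F : nat -> nat) (a : expr)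
| EA2 (P : recf) (F : nat -> nat -> nat) (a b : expr)
| EA3 (P : recf) (F : nat -> nat -> nat -> nat) (a b c : expr).

Fixpoint eval (env : list nat) (e : expr) : nat :=
  match e with
  | EVar i => nth i env 0
  | EConst n => n
  | EA1 _ F a => F (eval env a)
  | EA2 _ F a b => F (eval env a) (eval env b)
  | EA3 _ F a b c => F (eval env a) (eval env b) (eval env c)
  end.

Fixpoint wf_expr (n : nat) (e : expr) : Prop :=
  match e with
  | EVar i => i < n
  | EConst _ => True
  | EA1 P F a => implements1 P F /\ wf_expr n a
  | EA2 P F a b => implements2 P F /\ wf_expr n a /\ wf_expr n b
  | EA3 P F a b c => implements3 P F /\ wf_expr n a /\ wf_expr n b /\ wf_expr n c
  end.

Fixpoint const_recf (n : nat) : recf :=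
  match n with 0 => RZero | S n => RComp RSucc [const_recf n] end.

Fixpoint compile (e : expr) : recf :=
  match e with
  | EVar i => RProj i
  | EConst k => const_recf k
  | EA1 P _ a => RComp P [compile a]
  | EA2 P _ a b => RComp P [compile a; compile b]
  | EA3 P _ a b c => RComp P [compile a; compile b; compile c]
  end.

Lemma const_recf_correct n v : reval (const_recf n) v n.
Proof.
  induction n; simpl; [constructor|].
  econstructor; [econstructor; [eassumption | constructor] | constructor].
Qed.

Lemma compile_correct e env : wf_expr (length env) e -> reval (compile e) env (eval env e).
Proof.
  induction e; simpl; intros H.
  - constructor. now apply nth_error_nth'.
  - apply const_recf_correct.
  - destruct H as [HP Ha]. econstructor; [repeat econstructor; auto | apply HP].
  - destruct H as [HP [Ha Hb]]. econstructor; [repeat econstructor; auto | apply HP].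
  - destruct H as [HP [Ha [Hb Hc]]]. econstructor; [repeat econstructor; auto | apply HP].
Qed.

Lemma prim_correct f g v (fv : nat) (gv : nat -> nat -> nat) :
  reval f v fv -> (forall n r, reval g (n :: r :: v) (gv n r)) ->
  forall c, reval (RPrim f g) (c :: v) (nat_rect (fun _ => nat) fv gv c).
Proof.
  intros Hf Hg c. induction c; simpl; [now constructor | econstructor; eauto].
Qed.

Lemma reval_eq P v a b : reval P v a -> a = b -> reval P v b.
Proof. now intros H ->. Qed.

Ltac solve_wf := simpl; repeat split; try lia; auto.

(* Leaves the identity between the primitive recursion and the target function. *)
Ltac by_prim :=
  hnf; intros; eapply reval_eq;
  [apply prim_correct;
     [apply compile_correct; solve_wf | intros; apply compile_correct; solve_wf] |].

Ltac by_compile e :=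
  hnf; intros; eapply reval_eq; [apply (compile_correct e); solve_wf |].

Lemma succ_impl : implements1 RSucc S.
Proof. intro x. constructor. Qed.
#[local] Hint Resolve succ_impl : core.
Definition ES a := EA1 RSucc S a.

Definition addP := RPrim (compile (EVar 0)) (compile (ES (EVar 1))).
Lemma add_impl : implements2 addP Nat.add.
Proof. by_prim. simpl. induction x; simpl; auto. Qed.
#[local] Hint Resolve add_impl : core.
Definition eadd a b := EA2 addP Nat.add a b.

Definition mulP := RPrim (compile (EConst 0)) (compile (eadd (EVar 1) (EVar 2))).
Lemma mul_impl : implements2 mulP Nat.mul.
Proof. by_prim. simpl. induction x; simpl; lia. Qed.
#[local] Hint Resolve mul_impl : core.
Definition emul a b := EA2 mulP Nat.mul a b.

Definition predP := RPrim (compile (EConst 0)) (compile (EVar 0)).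
Lemma pred_impl : implements1 predP Nat.pred.
Proof. by_prim. now destruct x. Qed.
#[local] Hint Resolve pred_impl : core.
Definition epred a := EA1 predP Nat.pred a.

Definition rsubP := RPrim (compile (EVar 0)) (compile (epred (EVar 1))).
Lemma rsub_impl : implements2 rsubP (fun y x => x - y).
Proof. by_prim. simpl. induction x; simpl; lia. Qed.
#[local] Hint Resolve rsub_impl : core.
Definition subE := EA2 rsubP (fun y x => x - y) (EVar 1) (EVar 0).
Lemma sub_impl : implements2 (compile subE) Nat.sub.
Proof. by_compile subE. reflexivity. Qed.
#[local] Hint Resolve sub_impl : core.
Definition esub a b := EA2 (compile subE) Nat.sub a b.

Definition cond (c a b : nat) : nat := match c with 0 => a | S _ => b end.
Definition condP := RPrim (compile (EVar 0)) (compile (EVar 3)).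
Lemma cond_impl : implements3 condP cond.
Proof. by_prim. now destruct x. Qed.
#[local] Hint Resolve cond_impl : core.
Definition econd a b c := EA3 condP cond a b c.

Definition ltn (x y : nat) : nat := cond (y - x) 0 1.
Definition ltnE := econd (esub (EVar 1) (EVar 0)) (EConst 0) (EConst 1).
Lemma ltn_impl : implements2 (compile ltnE) ltn.
Proof. by_compile ltnE. reflexivity. Qed.
#[local] Hint Resolve ltn_impl : core.
Definition eltn a b := EA2 (compile ltnE) ltn a b.

Definition triP := RPrim (compile (EConst 0)) (compile (eadd (EVar 1) (ES (EVar 0)))).
Lemma tri_impl : implements1 triP tri.
Proof. by_prim. simpl. induction x; simpl in *; lia. Qed.
#[local] Hint Resolve tri_impl : core.
Definition etri a := EA1 triP tri a.

Definition cpairE := eadd (etri (eadd (EVar 0) (EVar 1))) (EVar 1).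
Lemma cpair_impl : implements2 (compile cpairE) cpair.
Proof. by_compile cpairE. symmetry. apply cpair_tri. Qed.
#[local] Hint Resolve cpair_impl : core.
Definition ecpair a b := EA2 (compile cpairE) cpair a b.

Ltac cbn_arith := cbn -[Nat.sub Nat.add Nat.mul tri cpair ufst usnd cond Nat.pred].

(* [ufst m + usnd m] is the least [z] with [m < tri (S z)]. *)
Definition diag (m : nat) : nat := ufst m + usnd m.
Definition diagE := esub (ES (EVar 1)) (etri (ES (EVar 0))).
Definition diagP := RMu (compile diagE).
Lemma diag_impl : implements1 diagP diag.
Proof.
  intros m. rewrite <- (cpair_unpair m). unfold diag.
  generalize (ufst m) (usnd m). intros x y. rewrite ufst_cpair, usnd_cpair.
  constructor.
  - by_compile diagE. cbn_arith. rewrite cpair_tri. simpl tri. lia.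
  - intros z Hz. exists (cpair x y - tri (S z)). by_compile diagE. cbn_arith.
    rewrite cpair_tri. pose proof (tri_le (S z) (x + y)). lia.
Qed.
#[local] Hint Resolve diag_impl : core.
Definition ediag a := EA1 diagP diag a.

Definition usndE := esub (EVar 0) (etri (ediag (EVar 0))).
Definition ufstE := esub (ediag (EVar 0)) usndE.
Lemma ufst_impl : implements1 (compile ufstE) ufst.
Proof.
  intros m. by_compile ufstE. cbn_arith. unfold diag. rewrite <- (cpair_unpair m).
  generalize (ufst m) (usnd m). intros x y. rewrite !ufst_cpair, !usnd_cpair, cpair_tri. lia.
Qed.
Lemma usnd_impl : implements1 (compile usndE) usnd.
Proof.
  intros m. by_compile usndE. cbn_arith. unfold diag. rewrite <- (cpair_unpair m).
  generalize (ufst m) (usnd m). intros x y. rewrite !ufst_cpair, !usnd_cpair, cpair_tri. lia.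
Qed.
#[local] Hint Resolve ufst_impl usnd_impl : core.
Definition eufst a := EA1 (compile ufstE) ufst a.
Definition eusnd a := EA1 (compile usndE) usnd a.

Lemma enc_inj l l' : enc l = enc l' -> l = l'.
Proof.
  revert l'; induction l; intros [|x l'] H; simpl in *; try lia; auto.
  injection H as H. apply cpair_inj in H as [-> H]. f_equal; auto.
Qed.

Definition code_hd (N : nat) : nat := cond N 0 (ufst (pred N)).
Definition code_tl (N : nat) : nat := cond N 0 (usnd (pred N)).
Definition code_hdE := econd (EVar 0) (EConst 0) (eufst (epred (EVar 0))).
Definition code_tlE := econd (EVar 0) (EConst 0) (eusnd (epred (EVar 0))).
Lemma code_hd_impl : implements1 (compile code_hdE) code_hd.
Proof. by_compile code_hdE. reflexivity. Qed.
Lemma code_tl_impl : implements1 (compile code_tlE) code_tl.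
Proof. by_compile code_tlE. reflexivity. Qed.
#[local] Hint Resolve code_hd_impl code_tl_impl : core.
Definition ecode_hd a := EA1 (compile code_hdE) code_hd a.

Lemma code_hd_enc l : code_hd (enc l) = hd 0 l.
Proof. destruct l; simpl; auto. apply ufst_cpair. Qed.
Lemma code_tl_enc l : code_tl (enc l) = enc (tl l).
Proof. destruct l; simpl; auto. apply usnd_cpair. Qed.

Definition code_drop (t N : nat) : nat := nat_rect (fun _ => nat) N (fun _ => code_tl) t.
Definition code_dropP :=
  RPrim (compile (EVar 0)) (compile (EA1 (compile code_tlE) code_tl (EVar 1))).
Lemma code_drop_impl : implements2 code_dropP code_drop.
Proof. by_prim. reflexivity. Qed.
#[local] Hint Resolve code_drop_impl : core.

Lemma code_drop_enc t l : code_drop t (enc l) = enc (skipn t l).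
Proof.
  revert l; induction t; intros l; [reflexivity|].
  cbn [code_drop nat_rect]. fold (code_drop t (enc l)).
  rewrite IHt, code_tl_enc. f_equal. clear IHt.
  revert l; induction t; intros [|x l]; simpl; auto.
Qed.

Definition code_nth (t N : nat) : nat := code_hd (code_drop t N).
Definition code_nthE := ecode_hd (EA2 code_dropP code_drop (EVar 0) (EVar 1)).
Lemma code_nth_impl : implements2 (compile code_nthE) code_nth.
Proof. by_compile code_nthE. reflexivity. Qed.
#[local] Hint Resolve code_nth_impl : core.
Definition ecode_nth a b := EA2 (compile code_nthE) code_nth a b.

Lemma code_nth_enc t l : code_nth t (enc l) = nth t l 0.
Proof.
  unfold code_nth. rewrite code_drop_enc, code_hd_enc.
  revert l; induction t; intros [|x l]; simpl; auto.
Qed.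

(* [decode f N] is correct once the fuel [f] reaches [N]. *)
Fixpoint decode (f N : nat) : list nat :=
  match f, N with
  | S f, S m => ufst m :: decode f (usnd m)
  | _, _ => []
  end.

Lemma decode_enc f N : N <= f -> enc (decode f N) = N.
Proof.
  revert N; induction f; intros [|N] H; simpl; auto; try lia.
  rewrite IHf, cpair_unpair; auto. pose proof (usnd_le N). lia.
Qed.

Definition code_length (N : nat) : nat := length (decode N N).
Definition code_lengthP := RMu code_dropP.
Lemma code_length_impl : implements1 code_lengthP code_length.
Proof.
  intros N. unfold code_length. rewrite <- (decode_enc N N) at 1 by lia.
  generalize (decode N N). intros l. constructor.
  - eapply reval_eq; [apply code_drop_impl|]. now rewrite code_drop_enc, skipn_all.
  - intros m Hm. destruct (skipn m l) as [|x t] eqn:E.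
    + apply (f_equal (@length nat)) in E. rewrite length_skipn in E. simpl in E. lia.
    + exists (cpair x (enc t)). eapply reval_eq; [apply code_drop_impl|].
      now rewrite code_drop_enc, E.
Qed.
#[local] Hint Resolve code_length_impl : core.

Lemma code_length_enc l : code_length (enc l) = length l.
Proof. unfold code_length. f_equal. apply enc_inj, decode_enc. lia. Qed.

Lemma length_pref p k : length (pref p k) = k.
Proof. unfold pref. now rewrite length_map, length_seq. Qed.

Lemma nth_pref p k t : t < k -> nth t (pref p k) 0 = p t.
Proof.
  intros H. unfold pref.
  rewrite nth_indep with (d' := p 0) by (rewrite length_map, length_seq; lia).
  now rewrite map_nth, seq_nth.
Qed.

Fixpoint mod2 (n : nat) : nat := match n with 0 => 0 | S n => cond (mod2 n) 1 0 end.
Fixpoint div2 (n : nat) : nat := match n with 0 => 0 | S n => div2 n + mod2 n end.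
Definition mod2P := RPrim (compile (EConst 0)) (compile (econd (EVar 1) (EConst 1) (EConst 0))).
Lemma mod2_impl : implements1 mod2P mod2.
Proof. by_prim. induction x; simpl in *; congruence. Qed.
#[local] Hint Resolve mod2_impl : core.
Definition emod2 a := EA1 mod2P mod2 a.
Definition div2P := RPrim (compile (EConst 0)) (compile (eadd (EVar 1) (emod2 (EVar 0)))).
Lemma div2_impl : implements1 div2P div2.
Proof. by_prim. induction x; simpl in *; congruence. Qed.
#[local] Hint Resolve div2_impl : core.
Definition ediv2 a := EA1 div2P div2 a.

Lemma div2_mod2_spec n : n = 2 * div2 n + mod2 n /\ mod2 n <= 1.
Proof. induction n as [|n [E L]]; simpl; [lia|]. destruct (mod2 n) as [|[|]]; simpl; lia. Qed.

Lemma mod2_div2_double n b : b <= 1 -> mod2 (2 * n + b) = b /\ div2 (2 * n + b) = n.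
Proof. intros. pose proof (div2_mod2_spec (2 * n + b)). lia. Qed.

Definition nt (x : nat) : nat := cond x 1 0.
Definition band (x y : nat) : nat := cond x 0 y.
Definition bor (x y : nat) : nat := cond x y 1.
Definition ntE := econd (EVar 0) (EConst 1) (EConst 0).
Definition bandE := econd (EVar 0) (EConst 0) (EVar 1).
Definition borE := econd (EVar 0) (EVar 1) (EConst 1).
Lemma nt_impl : implements1 (compile ntE) nt.
Proof. by_compile ntE. reflexivity. Qed.
Lemma band_impl : implements2 (compile bandE) band.
Proof. by_compile bandE. reflexivity. Qed.
Lemma bor_impl : implements2 (compile borE) bor.
Proof. by_compile borE. reflexivity. Qed.
#[local] Hint Resolve nt_impl band_impl bor_impl : core.
Definition ent a := EA1 (compile ntE) nt a.
Definition eband a b := EA2 (compile bandE) band a b.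
Definition ebor a b := EA2 (compile borE) bor a b.

Lemma ltn_iff x y : ltn x y <> 0 <-> x < y.
Proof. unfold ltn, cond. destruct (y - x) eqn:E; split; intros; lia. Qed.
Lemma nt_iff x : nt x <> 0 <-> x = 0.
Proof. unfold nt, cond. destruct x; split; intros; lia. Qed.
Lemma band_iff x y : band x y <> 0 <-> x <> 0 /\ y <> 0.
Proof. unfold band, cond. destruct x; split; intros; try tauto; lia. Qed.
Lemma bor_iff x y : bor x y <> 0 <-> x <> 0 \/ y <> 0.
Proof. unfold bor, cond. destruct x; split; intros; try tauto; lia. Qed.
Lemma cond_0_S_iff c k v : cond c 0 (S k) = S v <-> c <> 0 /\ k = v.
Proof. destruct c; simpl; split; intros; lia. Qed.

Definition rnum (r : nat) : nat := ufst r.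
Definition rneg (r : nat) : nat := ufst (usnd r).
Definition rden (r : nat) : nat := S (usnd (usnd r)).

Definition rat_lt (r r' : nat) : nat :=
  ltn (rnum r * rden r' + rneg r' * rden r) (rnum r' * rden r + rneg r * rden r').
Definition rat_le (r r' : nat) : nat := nt (rat_lt r' r).
Definition rat_opp (r : nat) : nat := cpair (rneg r) (cpair (rnum r) (usnd (usnd r))).

Definition ernum a := eufst a.
Definition erneg a := eufst (eusnd a).
Definition erden a := ES (eusnd (eusnd a)).
Definition rat_ltE :=
  eltn (eadd (emul (ernum (EVar 0)) (erden (EVar 1))) (emul (erneg (EVar 1)) (erden (EVar 0))))
       (eadd (emul (ernum (EVar 1)) (erden (EVar 0))) (emul (erneg (EVar 0)) (erden (EVar 1)))).
Lemma rat_lt_impl : implements2 (compile rat_ltE) rat_lt.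
Proof. by_compile rat_ltE. reflexivity. Qed.
#[local] Hint Resolve rat_lt_impl : core.
Definition erat_lt a b := EA2 (compile rat_ltE) rat_lt a b.
Definition rat_leE := ent (erat_lt (EVar 1) (EVar 0)).
Lemma rat_le_impl : implements2 (compile rat_leE) rat_le.
Proof. by_compile rat_leE. reflexivity. Qed.
#[local] Hint Resolve rat_le_impl : core.
Definition erat_le a b := EA2 (compile rat_leE) rat_le a b.
Definition rat_oppE := ecpair (erneg (EVar 0)) (ecpair (ernum (EVar 0)) (eusnd (eusnd (EVar 0)))).
Lemma rat_opp_impl : implements1 (compile rat_oppE) rat_opp.
Proof. by_compile rat_oppE. reflexivity. Qed.
#[local] Hint Resolve rat_opp_impl : core.
Definition erat_opp a := EA1 (compile rat_oppE) rat_opp a.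

Definition sign_bit (r : nat) : nat := cond (rat_lt 0 r) 1 0.
Definition sign_bitE := econd (erat_lt (EConst 0) (EVar 0)) (EConst 1) (EConst 0).
Lemma sign_bit_impl : implements1 (compile sign_bitE) sign_bit.
Proof. by_compile sign_bitE. reflexivity. Qed.
#[local] Hint Resolve sign_bit_impl : core.

Definition first_nonzero (f : nat -> nat) (m : nat) : nat :=
  nat_rect (fun _ => nat) 0 (fun t r => cond r (cond (f t) 0 (S t)) r) m.

Definition code_first_nonzero (off m N : nat) : nat :=
  first_nonzero (fun j => code_nth (2 * j + off) N) m.
Definition code_first_nonzeroP (off : nat) := RPrim (compile (EConst 0)) (compile
  (econd (EVar 1)
     (econd (ecode_nth (eadd (emul (EConst 2) (EVar 0)) (EConst off)) (EVar 2))
        (EConst 0) (ES (EVar 0)))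
     (EVar 1))).
Lemma code_first_nonzero_impl off : implements2 (code_first_nonzeroP off) (code_first_nonzero off).
Proof. by_prim. reflexivity. Qed.
#[local] Hint Resolve code_first_nonzero_impl : core.

Definition marker_code (e : nat) : nat := cpair 0 (cpair (3 * e + 4) e).
Definition minus3_code : nat := cpair 0 (cpair 3 0).

(* The segment known at stage [m] when the search for a nonzero entry has status [st]
   ([0] if none was found before [m], [S j] if [j] is the first one). *)
Definition seg_code (st m : nat) : nat :=
  let e := cond st m (pred st) in cpair (marker_code e) (cond st minus3_code (marker_code e)).
Definition seg_opp (g : nat) : nat := cpair (rat_opp (usnd g)) (rat_opp (ufst g)).
Definition disjoint (k g : nat) : nat :=
  bor (rat_le (usnd k) (ufst g)) (bor (rat_le (usnd g) (ufst k)) (rat_le (usnd k) (ufst k))).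
Definition inside (g k : nat) : nat := band (rat_lt (ufst k) (ufst g)) (rat_lt (usnd g) (usnd k)).

Definition emarker_code e := ecpair (EConst 0) (ecpair (eadd (emul (EConst 3) e) (EConst 4)) e).
Definition seg_codeE :=
  let e := econd (EVar 0) (EVar 1) (epred (EVar 0)) in
  ecpair (emarker_code e) (econd (EVar 0) (EConst minus3_code) (emarker_code e)).
Definition seg_oppE := ecpair (erat_opp (eusnd (EVar 0))) (erat_opp (eufst (EVar 0))).
Definition disjointE :=
  let k := EVar 0 in let g := EVar 1 in
  ebor (erat_le (eusnd k) (eufst g))
       (ebor (erat_le (eusnd g) (eufst k)) (erat_le (eusnd k) (eufst k))).
Definition insideE :=
  let g := EVar 0 in let k := EVar 1 in
  eband (erat_lt (eufst k) (eufst g)) (erat_lt (eusnd g) (eusnd k)).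
Lemma seg_code_impl : implements2 (compile seg_codeE) seg_code.
Proof. by_compile seg_codeE. reflexivity. Qed.
Lemma seg_opp_impl : implements1 (compile seg_oppE) seg_opp.
Proof. by_compile seg_oppE. reflexivity. Qed.
Lemma disjoint_impl : implements2 (compile disjointE) disjoint.
Proof. by_compile disjointE. reflexivity. Qed.
Lemma inside_impl : implements2 (compile insideE) inside.
Proof. by_compile insideE. reflexivity. Qed.
#[local] Hint Resolve seg_code_impl seg_opp_impl disjoint_impl inside_impl : core.

(* Digit [i] of the name of the instance: digits [2n] name the real [0]; digits [4n+1]
   enumerate the complement and digits [4n+3] the intervals meeting the set, [n] coding an
   interval [k] together with a stage [m]. *)
Definition instance_digit (s0 s1 : nat -> nat) (i : nat) : nat :=
  let n := div2 (div2 i) in let k := ufst n in let m := usnd n in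
  let gneg := seg_code (s1 m) m in let gpos := seg_opp (seg_code (s0 m) m) in
  cond (mod2 i) 0
    (cond (mod2 (div2 i))
       (cond (band (disjoint k gneg) (disjoint k gpos)) 0 (S k))
       (cond (bor (inside gneg k) (inside gpos k)) 0 (S k))).

Definition code_digit (i N : nat) : nat :=
  instance_digit (fun m => code_first_nonzero 0 m N) (fun m => code_first_nonzero 1 m N) i.
Definition code_digitE :=
  let i := EVar 0 in let N := EVar 1 in
  let n := ediv2 (ediv2 i) in let k := eufst n in let m := eusnd n in
  let seg off := EA2 (compile seg_codeE) seg_code
                   (EA2 (code_first_nonzeroP off) (code_first_nonzero off) m N) m in
  let gneg := seg 1 in let gpos := EA1 (compile seg_oppE) seg_opp (seg 0) in
  econd (emod2 i) (EConst 0)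
    (econd (emod2 (ediv2 i))
       (econd (eband (EA2 (compile disjointE) disjoint k gneg)
                     (EA2 (compile disjointE) disjoint k gpos))
          (EConst 0) (ES k))
       (econd (ebor (EA2 (compile insideE) inside gneg k) (EA2 (compile insideE) inside gpos k))
          (EConst 0) (ES k))).
Lemma code_digit_impl : implements2 (compile code_digitE) code_digit.
Proof. by_compile code_digitE. reflexivity. Qed.

(** * Computable maps on Baire space *)

Lemma pcomputable_graph (f : Baire -> Baire) w :
  recursive_word w -> monotone_word w -> (forall p, computes w p (f p)) ->
  pcomputable (fun p q => q = f p).
Proof.
  intros Hrec Hmono Hw. split; [now intros p q q' -> ->|].
  exists w. repeat split; auto. now intros p q ->.
Qed.

Section PointwiseWord.

Variables (g : nat -> nat -> nat) (gP : recf).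
Hypothesis g_impl : implements2 gP g.
#[local] Hint Resolve g_impl : core.

Definition pointwise_word (l : list nat) : list nat :=
  map (fun i => g i (enc l)) (seq 0 (length l)).

Definition collect (c L N : nat) : nat :=
  nat_rect (fun _ => nat) 0 (fun n r => S (cpair (g (L - S n) N) r)) c.
Definition collectP := RPrim (compile (EConst 0))
  (compile (ES (ecpair (EA2 gP g (esub (EVar 2) (ES (EVar 0))) (EVar 3)) (EVar 1)))).
Lemma collect_impl : implements3 collectP collect.
Proof. by_prim. reflexivity. Qed.
#[local] Hint Resolve collect_impl : core.

Lemma collect_enc c L N : c <= L -> collect c L N = enc (map (fun i => g i N) (seq (L - c) c)).
Proof.
  induction c; intros H; simpl; auto.
  rewrite IHc by lia. now replace (L - c) with (S (L - S c)) by lia.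
Qed.

Lemma pointwise_word_rec : recursive_word pointwise_word.
Proof.
  set (e := EA3 collectP collect (EA1 code_lengthP code_length (EVar 0))
                (EA1 code_lengthP code_length (EVar 0)) (EVar 0)).
  exists (compile e). intros l. by_compile e.
  simpl. rewrite code_length_enc, collect_enc, Nat.sub_diag by lia. reflexivity.
Qed.

Lemma pointwise_word_mono :
  (forall l t i, i < length l -> g i (enc (l ++ t)) = g i (enc l)) -> monotone_word pointwise_word.
Proof.
  intros Hloc l l' [t ->]. unfold pointwise_word. rewrite length_app, seq_app, map_app.
  eexists. f_equal. apply map_ext_in. intros i Hi. apply in_seq in Hi. apply Hloc. lia.
Qed.

Lemma pointwise_word_computes p : computes pointwise_word p (fun i => g i (enc (pref p (S i)))).
Proof.
  intros n. exists (S n). unfold pointwise_word. rewrite length_pref, nth_error_map, nth_error_seq.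
  now replace (n <? S n) with true by (symmetry; apply Nat.ltb_lt; lia).
Qed.

End PointwiseWord.

Lemma pcomputable_pointwise (g : nat -> nat -> nat) gP (f : Baire -> Baire) :
  implements2 gP g ->
  (forall l t i, i < length l -> g i (enc (l ++ t)) = g i (enc l)) ->
  (forall p i, f p i = g i (enc (pref p (S i)))) ->
  pcomputable (fun p q => q = f p).
Proof.
  intros Hg Hloc Hf. apply (pcomputable_graph _ (pointwise_word g)).
  - exact (pointwise_word_rec g gP Hg).
  - now apply pointwise_word_mono.
  - intros p n. destruct (pointwise_word_computes g p n) as [k Hk]. exists k. now rewrite Hf.
Qed.

Definition sign_of_first (b : Baire) : Baire := fun _ => sign_bit (b 0).

Lemma sign_of_first_computable : pcomputable (fun b q => q = sign_of_first b).
Proof.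
  set (e := EA1 (compile sign_bitE) sign_bit (ecode_hd (EVar 1))).
  apply (pcomputable_pointwise (fun _ N => sign_bit (code_hd N)) (compile e)).
  - intros i N. by_compile e. reflexivity.
  - intros [|x l] t i H; simpl in *; [lia|]. now rewrite !ufst_cpair.
  - intros p i. simpl. now rewrite ufst_cpair.
Qed.

Definition evens (p : Baire) : Baire := fun j => p (2 * j).
Definition odds (p : Baire) : Baire := fun j => p (2 * j + 1).

Definition instance (p : Baire) : Baire :=
  instance_digit (first_nonzero (evens p)) (first_nonzero (odds p)).

Lemma first_nonzero_ext f f' m :
  (forall j, j < m -> f j = f' j) -> first_nonzero f m = first_nonzero f' m.
Proof.
  induction m; intros H; [reflexivity|]. cbn [first_nonzero nat_rect].
  fold (first_nonzero f m) (first_nonzero f' m). rewrite IHm, (H m); auto.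
Qed.

Lemma instance_digit_ext s0 s1 s0' s1' i :
  s0 (usnd (div2 (div2 i))) = s0' (usnd (div2 (div2 i))) ->
  s1 (usnd (div2 (div2 i))) = s1' (usnd (div2 (div2 i))) ->
  instance_digit s0 s1 i = instance_digit s0' s1' i.
Proof. intros H0 H1. unfold instance_digit. cbv zeta. now rewrite H0, H1. Qed.

Lemma code_digit_enc (f : Baire) l i : (forall t, t < i -> f t = nth t l 0) ->
  code_digit i (enc l) = instance_digit (first_nonzero (evens f)) (first_nonzero (odds f)) i.
Proof.
  intros Hf. assert (Hm : 2 * usnd (div2 (div2 i)) <= i).
  { pose proof (usnd_le (div2 (div2 i))). pose proof (div2_mod2_spec i).
    pose proof (div2_mod2_spec (div2 i)). lia. }
  apply instance_digit_ext; apply first_nonzero_ext; intros j Hj;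
    unfold evens, odds; rewrite code_nth_enc, Hf by lia; f_equal; lia.
Qed.

Lemma instance_computable : pcomputable (fun p q => q = instance p).
Proof.
  apply (pcomputable_pointwise code_digit (compile code_digitE)); [apply code_digit_impl| |].
  - intros l t i Hi. rewrite (code_digit_enc (fun t => nth t l 0) l) by auto.
    apply code_digit_enc. intros u Hu. rewrite app_nth1; auto. lia.
  - intros p i. symmetry. apply code_digit_enc. intros t Ht. rewrite nth_pref; auto.
Qed.

Open Scope R_scope.

Definition rat_val (r : nat) : R := qR (rnum r) (rneg r) (usnd (usnd r)).

Lemma INR_S_pos c : 0 < INR (S c).
Proof. apply lt_0_INR. lia. Qed.

Lemma qR_lt_iff a1 b1 c1 a2 b2 c2 :
  qR a1 b1 c1 < qR a2 b2 c2 <-> (a1 * S c2 + b2 * S c1 < a2 * S c1 + b1 * S c2)%nat.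
Proof.
  unfold qR. pose proof (INR_S_pos c1) as P1. pose proof (INR_S_pos c2) as P2.
  set (K := INR (S c1) * INR (S c2)). assert (HK : 0 < K) by (unfold K; nra).
  assert (E1 : (INR a1 - INR b1) / INR (S c1) * K = (INR a1 - INR b1) * INR (S c2))
    by (unfold K; field; lra).
  assert (E2 : (INR a2 - INR b2) / INR (S c2) * K = (INR a2 - INR b2) * INR (S c1))
    by (unfold K; field; lra).
  split; intros H.
  - apply (Rmult_lt_compat_r K) in H; auto. rewrite E1, E2 in H.
    apply INR_lt. rewrite !plus_INR, !mult_INR. lra.
  - apply lt_INR in H. rewrite !plus_INR, !mult_INR in H.
    apply (Rmult_lt_reg_r K); auto. rewrite E1, E2. lra.
Qed.

Lemma rat_lt_iff r r' : rat_lt r r' <> 0%nat <-> rat_val r < rat_val r'.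
Proof. unfold rat_lt, rat_val, rden. now rewrite ltn_iff, qR_lt_iff. Qed.

Lemma rat_le_iff r r' : rat_le r r' <> 0%nat <-> rat_val r <= rat_val r'.
Proof.
  unfold rat_le. rewrite nt_iff. pose proof (rat_lt_iff r' r) as H.
  split; intros H1.
  - destruct (Rle_dec (rat_val r) (rat_val r')) as [|Hn]; auto.
    assert (rat_lt r' r <> 0%nat) by (apply H; lra). contradiction.
  - destruct (Nat.eq_dec (rat_lt r' r) 0) as [|E]; auto. apply H in E. lra.
Qed.

Lemma rat_val_cpair a b c : rat_val (cpair a (cpair b c)) = qR a b c.
Proof. unfold rat_val, rnum, rneg. now rewrite !ufst_cpair, !usnd_cpair, ufst_cpair. Qed.

Lemma rat_val_opp r : rat_val (rat_opp r) = - rat_val r.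
Proof.
  unfold rat_opp. rewrite rat_val_cpair. unfold rat_val, qR.
  pose proof (INR_S_pos (usnd (usnd r))). field. lra.
Qed.

Lemma is_rat_code_iff r q : is_rat_code r q <-> q = rat_val r.
Proof.
  split.
  - intros (a & b & c & -> & ->). now rewrite rat_val_cpair.
  - intros ->. exists (rnum r), (rneg r), (usnd (usnd r)). unfold rnum, rneg.
    now rewrite !cpair_unpair.
Qed.

Definition seg_lo (g : nat) : R := rat_val (ufst g).
Definition seg_hi (g : nat) : R := rat_val (usnd g).

Lemma is_int_code_iff k lo hi : is_int_code k lo hi <-> lo = seg_lo k /\ hi = seg_hi k.
Proof.
  unfold seg_lo, seg_hi. split.
  - intros (r & s & -> & H1 & H2). rewrite ufst_cpair, usnd_cpair, <- !is_rat_code_iff. auto.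
  - intros [-> ->]. exists (ufst k), (usnd k). rewrite cpair_unpair, !is_rat_code_iff. auto.
Qed.

Lemma seg_opp_lo g : seg_lo (seg_opp g) = - seg_hi g.
Proof. unfold seg_opp, seg_lo, seg_hi. now rewrite ufst_cpair, rat_val_opp. Qed.
Lemma seg_opp_hi g : seg_hi (seg_opp g) = - seg_lo g.
Proof. unfold seg_opp, seg_lo, seg_hi. now rewrite usnd_cpair, rat_val_opp. Qed.

Lemma disjoint_iff k g : disjoint k g <> 0%nat <->
  seg_hi k <= seg_lo g \/ seg_hi g <= seg_lo k \/ seg_hi k <= seg_lo k.
Proof. unfold disjoint, seg_lo, seg_hi. now rewrite !bor_iff, !rat_le_iff. Qed.

Lemma inside_iff g k : inside g k <> 0%nat <-> seg_lo k < seg_lo g /\ seg_hi g < seg_hi k.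
Proof. unfold inside, seg_lo, seg_hi. now rewrite band_iff, !rat_lt_iff. Qed.

Lemma sign_bit_pos r : 0 < rat_val r -> sign_bit r = 0%nat.
Proof.
  intros H. unfold sign_bit. replace 0 with (rat_val 0) in H by (unfold rat_val, qR; simpl; field).
  apply rat_lt_iff in H. now destruct (rat_lt 0 r).
Qed.

Lemma sign_bit_neg r : rat_val r < 0 -> sign_bit r = 1%nat.
Proof.
  intros H. unfold sign_bit. replace 0 with (rat_val 0) in H by (unfold rat_val, qR; simpl; field).
  destruct (rat_lt 0 r) eqn:E; [reflexivity|]. exfalso.
  assert (rat_lt 0 r <> 0%nat) by lia. apply rat_lt_iff in H0. lra.
Qed.

Lemma qR_dense x y : x < y -> exists a b c, x < qR a b c < y.
Proof.
  intros Hxy. destruct (archimed_cor1 (y - x)) as [N [HN HN0]]; [lra|].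
  set (C := INR N). assert (HC : 0 < C) by (apply lt_0_INR; lia).
  destruct (archimed (x * C)) as [U1 U2].
  exists (Z.to_nat (up (x * C))), (Z.to_nat (- up (x * C))), (pred N). unfold qR.
  replace (S (pred N)) with N by lia. fold C.
  replace (INR (Z.to_nat (up (x * C))) - INR (Z.to_nat (- up (x * C)))) with (IZR (up (x * C)))
    by (rewrite !INR_IZR_INZ, <- minus_IZR; f_equal; lia).
  assert (x < IZR (up (x * C)) / C) by (apply Rmult_lt_reg_r with C; auto; field_simplify; lra).
  assert (IZR (up (x * C)) / C <= x + / C).
  { apply Rmult_le_reg_r with C; auto. rewrite Rmult_plus_distr_r. field_simplify; lra. }
  fold C in HN. lra.
Qed.

Lemma rat_dense x y : x < y -> exists r, x < rat_val r < y.
Proof.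
  intros H. destruct (qR_dense x y H) as (a & b & c & Hq).
  exists (cpair a (cpair b c)). now rewrite rat_val_cpair.
Qed.

(** * The points of an instance and their approximating segments *)

Definition marker (j : nat) : R := -3 - / INR (S j).

Lemma rat_val_marker_code e : rat_val (marker_code e) = marker e.
Proof.
  unfold marker_code, marker. rewrite rat_val_cpair. unfold qR. pose proof (INR_S_pos e).
  replace (INR (3 * e + 4)) with (3 * INR (S e) + 1)
    by (rewrite S_INR, plus_INR, mult_INR; simpl; ring).
  simpl INR at 1. field. lra.
Qed.

Lemma rat_val_minus3_code : rat_val minus3_code = -3.
Proof. unfold minus3_code. rewrite rat_val_cpair. unfold qR. simpl. field. Qed.

Lemma marker_lt j : marker j < -3.
Proof. unfold marker. pose proof (Rinv_0_lt_compat _ (INR_S_pos j)). lra. Qed.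

Lemma marker_le j j' : (j <= j')%nat -> marker j <= marker j'.
Proof.
  intros H. unfold marker. pose proof (INR_S_pos j).
  assert (/ INR (S j') <= / INR (S j)) by (apply Rinv_le_contravar; auto; apply le_INR; lia). lra.
Qed.

Lemma marker_unbounded x : x < -3 -> exists m, x < marker m.
Proof.
  intros H. destruct (archimed_cor1 (-3 - x)) as [N [HN1 HN2]]; [lra|].
  exists (pred N). unfold marker. replace (S (pred N)) with N by lia. lra.
Qed.

Definition is_first_nonzero (s : Baire) (j : nat) : Prop :=
  s j <> 0%nat /\ forall i, (i < j)%nat -> s i = 0%nat.

Definition is_point (s : Baire) (z : R) : Prop :=
  ((forall j, s j = 0%nat) /\ z = -3) \/ (exists j, is_first_nonzero s j /\ z = marker j).

Lemma is_first_nonzero_unique s j j' : is_first_nonzero s j -> is_first_nonzero s j' -> j = j'.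
Proof.
  intros [H1 H2] [H1' H2']. destruct (lt_eq_lt_dec j j') as [[h|h]|h]; auto.
  - now apply H2' in h.
  - now apply H2 in h.
Qed.

Lemma first_nonzero_spec s m :
  (first_nonzero s m = 0%nat /\ forall j, (j < m)%nat -> s j = 0%nat) \/
  (exists j, (j < m)%nat /\ first_nonzero s m = S j /\ is_first_nonzero s j).
Proof.
  induction m as [|m IH]; [left; split; auto; lia|].
  cbn [first_nonzero nat_rect]. fold (first_nonzero s m).
  destruct IH as [[H0 H1]|(j & Hj & H0 & H1)].
  - rewrite H0. cbn [cond]. destruct (s m) eqn:E; cbn [cond].
    + left. split; auto. intros j Hj. destruct (Nat.eq_dec j m); subst; auto. apply H1. lia.
    + right. exists m. repeat split; auto; lia.
  - rewrite H0. right. exists j. repeat split; auto; apply H1.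
Qed.

Lemma is_point_exists s : exists z, is_point s z.
Proof.
  destruct (classic (exists j, s j <> 0%nat)) as [[j Hj]|H].
  - induction j as [j IH] using (well_founded_induction lt_wf).
    destruct (classic (exists i, (i < j)%nat /\ s i <> 0%nat)) as [(i & Hi & Hsi)|Hmin].
    + exact (IH i Hi Hsi).
    + exists (marker j). right. exists j. repeat split; auto.
      intros i Hi. destruct (Nat.eq_dec (s i) 0); auto. exfalso. eauto.
  - exists (-3). left. split; auto. intros j. destruct (Nat.eq_dec (s j) 0); auto.
    exfalso. eauto.
Qed.

Lemma is_point_unique s z z' : is_point s z -> is_point s z' -> z = z'.
Proof.
  intros [[H1 ->]|(j & [Hj1 Hj2] & ->)] [[H1' ->]|(j' & Hj' & ->)]; auto.
  - exfalso. apply Hj', H1.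
  - exfalso. apply Hj1, H1'.
  - f_equal. now apply (is_first_nonzero_unique s).
Qed.

Definition stage (s : Baire) (m : nat) : nat := seg_code (first_nonzero s m) m.

Lemma stage_cases s m :
  ((forall j, (j < m)%nat -> s j = 0%nat) /\
     seg_lo (stage s m) = marker m /\ seg_hi (stage s m) = -3) \/
  (exists j, is_first_nonzero s j /\
     seg_lo (stage s m) = marker j /\ seg_hi (stage s m) = marker j).
Proof.
  unfold stage, seg_code, seg_lo, seg_hi. rewrite ufst_cpair, usnd_cpair.
  destruct (first_nonzero_spec s m) as [[-> H]|(j & _ & -> & H)]; cbn [cond pred].
  - left. now rewrite rat_val_marker_code, rat_val_minus3_code.
  - right. exists j. now rewrite rat_val_marker_code.
Qed.

Lemma point_in_stage s m z : is_point s z -> seg_lo (stage s m) <= z <= seg_hi (stage s m).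
Proof.
  intros Hz. destruct (stage_cases s m) as [(H0 & -> & ->)|(j & Hj & -> & ->)].
  - destruct Hz as [[_ ->]|(j & [Hj1 Hj2] & ->)].
    + pose proof (marker_lt m). lra.
    + assert (m <= j)%nat by (destruct (le_lt_dec m j); auto; exfalso; apply Hj1; auto).
      pose proof (marker_le _ _ H). pose proof (marker_lt j). lra.
  - assert (is_point s (marker j)) by (right; eauto).
    rewrite (is_point_unique s z (marker j)); auto. lra.
Qed.

Lemma stage_inside s z lo hi : is_point s z -> lo < z < hi ->
  exists m, lo < seg_lo (stage s m) /\ seg_hi (stage s m) < hi.
Proof.
  intros [[H0 ->]|(j & Hj & ->)] Hi.
  - destruct (marker_unbounded lo) as [m Hm]; [lra|]. exists m.
    destruct (stage_cases s m) as [(_ & -> & ->)|(j & [Hj _] & _)]; [lra|].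
    exfalso. apply Hj, H0.
  - exists (S j). destruct (stage_cases s (S j)) as [(H0 & _)|(j' & Hj' & -> & ->)].
    + exfalso. destruct Hj as [Hj _]. apply Hj, H0. lia.
    + rewrite (is_first_nonzero_unique s j' j) by auto. lra.
Qed.

Lemma stage_avoid s x z : is_point s z -> x <> z ->
  exists m0, forall m, (m0 <= m)%nat -> x < seg_lo (stage s m) \/ seg_hi (stage s m) < x.
Proof.
  intros [[HZ ->]|(j & Hj & ->)] Hx.
  - destruct (Rlt_dec x (-3)) as [Hlt|Hge].
    + destruct (marker_unbounded x Hlt) as [m0 Hm0]. exists m0. intros m Hm. left.
      destruct (stage_cases s m) as [(_ & -> & _)|(j & [Hj _] & _)].
      * pose proof (marker_le _ _ Hm). lra.
      * exfalso. apply Hj, HZ.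
    + exists 0%nat. intros m _. right.
      destruct (stage_cases s m) as [(_ & _ & ->)|(j & [Hj _] & _)]; [lra|].
      exfalso. apply Hj, HZ.
  - exists (S j). intros m Hm.
    destruct (stage_cases s m) as [(H0 & _)|(j' & Hj' & -> & ->)].
    + exfalso. destruct Hj as [Hj _]. apply Hj, H0. lia.
    + rewrite (is_first_nonzero_unique s j' j) by auto. lra.
Qed.

(** * The name of the instance *)

Definition pair_set (s0 s1 : Baire) (z : R) : Prop := is_point s1 z \/ is_point s0 (- z).
Definition llpo_set (p : Baire) : R -> Prop := pair_set (evens p) (odds p).

Definition neg_stage (p : Baire) (m : nat) : nat := stage (odds p) m.
Definition pos_stage (p : Baire) (m : nat) : nat := seg_opp (stage (evens p) m).

Lemma instance_even p n : instance p (2 * n)%nat = 0%nat.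
Proof.
  destruct (mod2_div2_double n 0) as [E _]; [lia|]. rewrite Nat.add_0_r in E.
  unfold instance, instance_digit. now rewrite E.
Qed.

Lemma instance_compl p n : instance p (2 * (2 * n) + 1)%nat =
  cond (band (disjoint (ufst n) (neg_stage p (usnd n))) (disjoint (ufst n) (pos_stage p (usnd n))))
       0 (S (ufst n)).
Proof.
  destruct (mod2_div2_double (2 * n) 1) as [E1 D1]; [lia|].
  destruct (mod2_div2_double n 0) as [E2 D2]; [lia|]. rewrite Nat.add_0_r in E2, D2.
  unfold instance, instance_digit. cbv zeta. now rewrite E1, D1, E2, D2.
Qed.

Lemma instance_meet p n : instance p (2 * (2 * n + 1) + 1)%nat =
  cond (bor (inside (neg_stage p (usnd n)) (ufst n)) (inside (pos_stage p (usnd n)) (ufst n)))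
       0 (S (ufst n)).
Proof.
  destruct (mod2_div2_double (2 * n + 1) 1) as [E1 D1]; [lia|].
  destruct (mod2_div2_double n 1) as [E2 D2]; [lia|].
  unfold instance, instance_digit. cbv zeta. now rewrite E1, D1, E2, D2.
Qed.

Lemma llpo_set_in_stage p m z : llpo_set p z ->
  (seg_lo (neg_stage p m) <= z <= seg_hi (neg_stage p m)) \/
  (seg_lo (pos_stage p m) <= z <= seg_hi (pos_stage p m)).
Proof.
  unfold neg_stage, pos_stage. rewrite seg_opp_lo, seg_opp_hi.
  intros [Hz|Hz]; apply (point_in_stage _ m) in Hz; [left|right]; lra.
Qed.

Lemma llpo_set_inside p z lo hi : llpo_set p z -> lo < z < hi -> exists m,
  (lo < seg_lo (neg_stage p m) /\ seg_hi (neg_stage p m) < hi) \/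
  (lo < seg_lo (pos_stage p m) /\ seg_hi (pos_stage p m) < hi).
Proof.
  unfold neg_stage, pos_stage. intros [Hz|Hz] Hi.
  - destruct (stage_inside _ _ lo hi Hz Hi) as [m Hm]. exists m. now left.
  - destruct (stage_inside _ _ (- hi) (- lo) Hz) as [m Hm]; [lra|].
    exists m. right. rewrite seg_opp_lo, seg_opp_hi. lra.
Qed.

Lemma llpo_set_avoid p x : ~ llpo_set p x -> exists m,
  (x < seg_lo (neg_stage p m) \/ seg_hi (neg_stage p m) < x) /\
  (x < seg_lo (pos_stage p m) \/ seg_hi (pos_stage p m) < x).
Proof.
  intros Hx. unfold neg_stage, pos_stage.
  destruct (is_point_exists (odds p)) as [z1 Hz1]. destruct (is_point_exists (evens p)) as [z0 Hz0].
  destruct (stage_avoid _ x z1 Hz1) as [m1 Hm1]; [intros ->; apply Hx; now left|].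
  destruct (stage_avoid _ (- x) z0 Hz0) as [m0 Hm0]; [intros <-; apply Hx; now right|].
  exists (Nat.max m1 m0). rewrite seg_opp_lo, seg_opp_hi. split.
  - apply Hm1. lia.
  - specialize (Hm0 (Nat.max m1 m0) ltac:(lia)). lra.
Qed.

Lemma seg_lo_cpair r r' : seg_lo (cpair r r') = rat_val r.
Proof. unfold seg_lo. now rewrite ufst_cpair. Qed.
Lemma seg_hi_cpair r r' : seg_hi (cpair r r') = rat_val r'.
Proof. unfold seg_hi. now rewrite usnd_cpair. Qed.

Lemma avoid_margin x lo hi : x < lo \/ hi < x -> exists d, 0 < d /\ (x + d <= lo \/ hi <= x - d).
Proof. intros [H|H]; [exists (lo - x) | exists (x - hi)]; split; lra. Qed.

Lemma complement_enumerated p x : ~ llpo_set p x ->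
  exists n k lo hi, instance p (2 * (2 * n) + 1)%nat = S k /\ is_int_code k lo hi /\ lo < x < hi.
Proof.
  intros Hx. destruct (llpo_set_avoid p x Hx) as [m [Hneg Hpos]].
  destruct (avoid_margin _ _ _ Hneg) as [d1 [Hd1 Hneg']].
  destruct (avoid_margin _ _ _ Hpos) as [d0 [Hd0 Hpos']].
  pose proof (Rmin_l d1 d0). pose proof (Rmin_r d1 d0).
  assert (Hd : 0 < Rmin d1 d0) by (apply Rmin_glb_lt; auto).
  destruct (rat_dense (x - Rmin d1 d0) x) as [r Hr]; [lra|].
  destruct (rat_dense x (x + Rmin d1 d0)) as [r' Hr']; [lra|].
  exists (cpair (cpair r r') m), (cpair r r'), (rat_val r), (rat_val r').
  rewrite instance_compl, ufst_cpair, usnd_cpair, is_int_code_iff, seg_lo_cpair, seg_hi_cpair.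
  repeat split; try lra. apply cond_0_S_iff. split; auto.
  apply band_iff. rewrite !disjoint_iff, seg_lo_cpair, seg_hi_cpair. lra.
Qed.

Lemma complement_sound p n k lo hi x : instance p (2 * (2 * n) + 1)%nat = S k ->
  is_int_code k lo hi -> lo < x < hi -> ~ llpo_set p x.
Proof.
  rewrite instance_compl, cond_0_S_iff, band_iff, !disjoint_iff, is_int_code_iff.
  intros [Hd <-] [-> ->] Hx HA. destruct (llpo_set_in_stage p (usnd n) x HA); lra.
Qed.

Lemma meet_enumerated p k lo hi x : is_int_code k lo hi -> llpo_set p x -> lo < x < hi ->
  exists n, instance p (2 * (2 * n + 1) + 1)%nat = S k.
Proof.
  rewrite is_int_code_iff. intros [-> ->] HA Hx.
  destruct (llpo_set_inside p x _ _ HA Hx) as [m Hm].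
  exists (cpair k m).
  rewrite instance_meet, ufst_cpair, usnd_cpair, cond_0_S_iff, bor_iff, !inside_iff.
  auto.
Qed.

Lemma meet_sound p n k : instance p (2 * (2 * n + 1) + 1)%nat = S k ->
  exists lo hi, is_int_code k lo hi /\ exists x, llpo_set p x /\ lo < x < hi.
Proof.
  rewrite instance_meet, cond_0_S_iff, bor_iff, !inside_iff. intros [Hin <-].
  exists (seg_lo (ufst n)), (seg_hi (ufst n)). split; [now apply is_int_code_iff|].
  unfold neg_stage, pos_stage in Hin. rewrite seg_opp_lo, seg_opp_hi in Hin.
  destruct Hin as [Hin|Hin].
  - destruct (is_point_exists (odds p)) as [z Hz]. exists z. split; [now left|].
    pose proof (point_in_stage _ (usnd n) z Hz). lra.
  - destruct (is_point_exists (evens p)) as [z Hz]. exists (- z). split.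
    + right. now rewrite Ropp_involutive.
    + pose proof (point_in_stage _ (usnd n) z Hz). lra.
Qed.

Lemma instance_closed_name p :
  delta closed_space (fun n => instance p (2 * n + 1)%nat) (llpo_set p).
Proof.
  split.
  - intros x. split; [apply complement_enumerated|].
    intros (n & k & lo & hi & Hn & Hk & Hx). exact (complement_sound p n k lo hi x Hn Hk Hx).
  - intros k. split.
    + intros (lo & hi & Hk & x & HA & Hx). exact (meet_enumerated p k lo hi x Hk HA Hx).
    + intros [n Hn]. exact (meet_sound p n k Hn).
Qed.

Lemma instance_real_name p : delta real_space (fun n => instance p (2 * n)%nat) 0.
Proof.
  intros n. exists 0. rewrite instance_even. split.
  - exists 0%nat, 0%nat, 0%nat. split; [reflexivity|]. unfold qR. simpl. field.
  - rewrite Rminus_0_r, Rabs_R0. apply Rlt_le, Rinv_0_lt_compat, pow_lt. lra.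
Qed.

Lemma instance_name p : delta (prod_space real_space closed_space) (instance p) (0, llpo_set p).
Proof. split; [apply instance_real_name | apply instance_closed_name]. Qed.

Lemma llpo_set_closed p : closed_set (llpo_set p).
Proof.
  destruct (is_point_exists (odds p)) as [z1 H1]. destruct (is_point_exists (evens p)) as [z0 H0].
  intros x Hx. assert (x <> z1) by (intros ->; apply Hx; now left).
  assert (x <> - z0) by (intros ->; apply Hx; right; now rewrite Ropp_involutive).
  assert (Hd : 0 < Rmin (Rabs (x - z1)) (Rabs (x + z0)))
    by (apply Rmin_glb_lt; apply Rabs_pos_lt; lra).
  exists (mkposreal _ Hd). intros y Hy [Hy1|Hy0]; unfold disc in Hy; cbn [pos] in Hy.
  - rewrite (is_point_unique _ y z1 Hy1 H1), Rabs_minus_sym in Hy.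
    pose proof (Rmin_l (Rabs (x - z1)) (Rabs (x + z0))). lra.
  - assert (y = - z0) by (rewrite <- (is_point_unique _ _ _ Hy0 H0); ring). subst y.
    rewrite Rabs_minus_sym in Hy. replace (x - - z0) with (x + z0) in Hy by ring.
    pose proof (Rmin_r (Rabs (x - z1)) (Rabs (x + z0))). lra.
Qed.

Lemma llpo_set_in_dom p : pdom Proj_R (0, llpo_set p).
Proof.
  split; [apply llpo_set_closed|].
  destruct (is_point_exists (odds p)) as [z Hz]. exists z. now left.
Qed.

(** * Reading the answer off the projection *)

Definition exclusive (s0 s1 : Baire) : Prop :=
  forall j j', s0 j <> 0%nat -> s1 j' <> 0%nat -> False.

Lemma LLPO_dom_exclusive x : pdom LLPO x -> exclusive (fst x) (snd x).
Proof. intros H j j' H0 H1. now destruct (H false true j j' H0 H1). Qed.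

Lemma point_le_minus3 s z : is_point s z -> z <= -3.
Proof. intros [[_ ->]|(j & _ & ->)]; [lra|]. pose proof (marker_lt j). lra. Qed.

Lemma pair_set_swap s0 s1 z : pair_set s0 s1 z <-> pair_set s1 s0 (- z).
Proof. unfold pair_set. rewrite Ropp_involutive. tauto. Qed.

Lemma pair_set_abs s0 s1 z : pair_set s0 s1 z -> 3 <= Rabs z.
Proof.
  intros [H|H]; apply point_le_minus3 in H; [rewrite Rabs_left | rewrite Rabs_right]; lra.
Qed.

Lemma nearest_neg s0 s1 y : exclusive s0 s1 -> pair_set s0 s1 y ->
  (forall z, pair_set s0 s1 z -> Rabs y <= Rabs z) -> y < 0 -> forall m, s1 m = 0%nat.
Proof.
  intros Hex Hy Hmin Hneg m. destruct (Nat.eq_dec (s1 m) 0) as [|Hm]; auto. exfalso.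
  assert (H3 : pair_set s0 s1 3).
  { right. left. split; [|ring]. intros j.
    destruct (Nat.eq_dec (s0 j) 0); auto. exfalso. eauto. }
  specialize (Hmin 3 H3).
  destruct Hy as [[[Hz _]|(j & _ & ->)]|Hy].
  - apply Hm, Hz.
  - pose proof (marker_lt j). rewrite Rabs_left, Rabs_right in Hmin; lra.
  - apply point_le_minus3 in Hy. lra.
Qed.

Lemma nearest_pos s0 s1 y : exclusive s0 s1 -> pair_set s0 s1 y ->
  (forall z, pair_set s0 s1 z -> Rabs y <= Rabs z) -> 0 < y -> forall m, s0 m = 0%nat.
Proof.
  intros Hex Hy Hmin Hpos. apply (nearest_neg s1 s0 (- y)).
  - intros j j' H0 H1. eauto.
  - now apply (pair_set_swap s0 s1 y).
  - intros z Hz. rewrite Rabs_Ropp, <- (Rabs_Ropp z). apply Hmin, (pair_set_swap s0 s1 (- z)).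
    now rewrite Ropp_involutive.
  - lra.
Qed.

Lemma sign_bit_b2n r : sign_bit r = b2n (Nat.eqb (sign_bit r) 1).
Proof. unfold sign_bit. now destruct (rat_lt 0 r). Qed.

Lemma nearest_sign_answers s0 s1 y r : exclusive s0 s1 -> pair_set s0 s1 y ->
  (forall z, pair_set s0 s1 z -> Rabs (0 - y) <= Rabs (0 - z)) ->
  Rabs (y - rat_val r) <= / 2 ^ 0 ->
  forall m, (if Nat.eqb (sign_bit r) 1 then s1 else s0) m = 0%nat.
Proof.
  intros Hex Hy Hmin Hr.
  assert (Hmin' : forall z, pair_set s0 s1 z -> Rabs y <= Rabs z).
  { intros z Hz. specialize (Hmin z Hz). now rewrite !Rminus_0_l, !Rabs_Ropp in Hmin. }
  pose proof (pair_set_abs _ _ _ Hy). simpl in Hr. rewrite Rinv_1 in Hr.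
  pose proof (Rle_abs (y - rat_val r)). pose proof (Rle_abs (- (y - rat_val r))).
  rewrite Rabs_Ropp in *.
  destruct (Rlt_dec y 0) as [Hneg|Hpos].
  - rewrite Rabs_left in H by lra. rewrite sign_bit_neg by lra.
    exact (nearest_neg s0 s1 y Hex Hy Hmin' Hneg).
  - rewrite Rabs_right in H by lra. rewrite sign_bit_pos by lra.
    apply (nearest_pos s0 s1 y); auto. lra.
Qed.

Theorem proposition4p20 : sW_le LLPO Proj_R.
Proof.
  exists (fun b q => q = sign_of_first b), (fun p q => q = instance p).
  split; [apply sign_of_first_computable|]. split; [apply instance_computable|].
  intros G _ HG p [s0 s1] [Hs0 Hs1] Hdom. cbn in Hs0, Hs1. subst s0 s1.
  destruct (HG _ _ (instance_name p) (llpo_set_in_dom p)) as (b & Hb & y & Hy & HyA & Hmin).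
  destruct (Hy 0%nat) as (q & Hq & Hyq). apply is_rat_code_iff in Hq. subst q.
  exists (sign_of_first b). split; [exists (instance p), b; auto|].
  exists (Nat.eqb (sign_bit (b 0%nat)) 1). split; [apply sign_bit_b2n|].
  exact (nearest_sign_answers (evens p) (odds p) y (b 0%nat)
           (LLPO_dom_exclusive _ Hdom) HyA Hmin Hyq).
Qed.
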